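(* For $\mu,\nu>0$, $\Gamma\in\mathbb R\setminus\{0\}$ and $a\in\mathbb Q$, $$\big(E_{\mu,\Gamma,a}*G_\nu\big)(q)=\sqrt{\frac{2\pi\mu}{\Gamma^2}}\;G_{\mu+\nu}(q)\;\vartheta\!\begin{bmatrix}0\\ a\end{bmatrix}\!\Big(-\frac{q}{(1+\nu/\mu)\Gamma},\,\frac{2\pi i\nu}{(1+\nu/\mu)\Gamma^2}\Big)\quad\text{for all }q\in\mathbb R.$$
   Context: $G_{\nu}(x)=(2\pi\nu)^{-1/2}e^{-x^2/(2\nu)}$; $(f*g)(x)=\int f(y)g(x-y)\,dy$; $E_{\mu,\Gamma,a}(x)=e^{-x^2/(2\mu)}\sum_{s\in\mathbb Z}\delta(x-(s+a)\Gamma)$ (a Gaussian-weighted Dirac comb), so $(E_{\mu,\Gamma,a}*G_\nu)(q)=\sum_{s}e^{-(s+a)^2\Gamma^2/(2\mu)}G_\nu(q-(s+a)\Gamma)$. Theta function with characteristics: for $a,b\in\mathbb Q$, $z\in\mathbb C$, $\mathrm{Im}\,\tau>0$, $\vartheta\!\begin{bmatrix}a\\ b\end{bmatrix}\!(z,\tau)=\sum_{s\in\mathbb Z}\exp[\pi i\tau(s+a)^2+2\pi i(z+b)(s+a)]$. *)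

From Stdlib Require Import Reals QArith Qreals ZArith.
From Coquelicot Require Export Coquelicot.
Open Scope R_scope.

Definition Gauss (nu x : R) : R := / sqrt (2 * PI * nu) * exp (- x ^ 2 / (2 * nu)).

Definition zsum_R (f : Z -> R) : R :=
  Series (fun n : nat => f (Z.of_nat n)) + Series (fun n : nat => f (- Z.of_nat (S n))%Z).

Definition zsum_C (f : Z -> C) : C :=
  (zsum_R (fun s => Re (f s)), zsum_R (fun s => Im (f s))).

Definition cexp (z : C) : C := (exp (Re z) * cos (Im z), exp (Re z) * sin (Im z)).

Definition theta (a b : Q) (z tau : C) : C :=
  zsum_C (fun s : Z =>
    cexp (RtoC PI * Ci * tau * RtoC ((IZR s + Q2R a) ^ 2)
          + RtoC (2 * PI) * Ci * (z + RtoC (Q2R b)) * RtoC (IZR s + Q2R a))%C).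

Definition E_conv_G (mu Gamma : R) (a : Q) (nu q : R) : R :=
  zsum_R (fun s : Z =>
    exp (- ((IZR s + Q2R a) ^ 2 * Gamma ^ 2) / (2 * mu))
    * Gauss nu (q - (IZR s + Q2R a) * Gamma)).

From Stdlib Require Import Reals QArith Qreals ZArith Lra Lia.
From Coquelicot Require Import Coquelicot.
Open Scope R_scope.

(* After completing the square in the exponent, the convolution is a multiple of the
   periodization [F x = sum_s exp (- A (s + x)^2)] of a Gaussian, while for real [z] and purely
   imaginary [tau] the theta value is the cosine series
   [H x = sum_s exp (- PI^2 s^2 / A) cos (2 PI s x)].  The identity is then the Poisson summation
   formula [F = sqrt (PI / A) * H].  Both sides are continuous and 1-periodic.  Unfolding the
   integral of [F] against [cos (2 PI k x)] over a period gives the Fourier transform of the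
   Gaussian, computed by differentiating under the integral sign, so [F] and [H] have
   proportional Fourier coefficients; a continuous periodic function whose Fourier coefficients
   vanish is zero, as testing it against the concentrating kernels [((1 + cos (2 PI y)) / 2)^n]
   shows.  The constant is the Gaussian integral, which the self-duality of the case [A = PI]
   and the scaling in [A] pin down to [sqrt (PI / A)]. *)

Ltac solve_continuity :=
  match goal with |- continuity_pt ?f ?x =>
    apply (proj2 (continuity_pt_filterlim f x));
    apply (@ex_derive_continuous R_AbsRing R_NormedModule f x); auto_derive; auto
  end.

(* An equation whose left side is an [RInt] is stated in [CompleteNormedModule.sort _], not
   in [R]; [ring] and [field] accept it only after this conversion. *)
Ltac R_eq := match goal with |- @eq _ ?a ?b => change (@eq R a b) end.

Lemma exp_le x y : x <= y -> exp x <= exp y.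
Proof. intros [H | ->]; [left; apply exp_increasing |]; lra. Qed.

Lemma exp_mult_INR a n : exp (INR n * a) = exp a ^ n.
Proof.
  induction n as [|n IH]; [simpl; rewrite Rmult_0_l; apply exp_0 |].
  rewrite S_INR, Rmult_plus_distr_r, exp_plus, IH, Rmult_1_l; simpl; ring.
Qed.

Lemma exp_neg_lt_1 x : 0 < x -> 0 < exp (- x) < 1.
Proof. split; [apply exp_pos | rewrite <- exp_0; apply exp_increasing; lra]. Qed.

(* Coquelicot's integration lemmas are stated in an arbitrary normed module; rewriting with
   them in real integrands needs these instances at [R]. *)

Lemma ex_RInt_continuous_R (f : R -> R) a b :
  (forall x, continuity_pt f x) -> ex_RInt f a b.
Proof.
  intros H. apply (@ex_RInt_continuous R_CompleteNormedModule). intros z _.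
  apply continuity_pt_filterlim, H.
Qed.

Lemma RInt_ext_R (f g : R -> R) a b :
  (forall x, Rmin a b < x < Rmax a b -> f x = g x) -> RInt f a b = RInt g a b.
Proof. exact (RInt_ext f g a b). Qed.

Lemma RInt_plus_R (f g : R -> R) a b : ex_RInt f a b -> ex_RInt g a b ->
  RInt (fun x => f x + g x) a b = RInt f a b + RInt g a b.
Proof. exact (RInt_plus f g a b). Qed.

Lemma RInt_minus_R (f g : R -> R) a b : ex_RInt f a b -> ex_RInt g a b ->
  RInt (fun x => f x - g x) a b = RInt f a b - RInt g a b.
Proof. exact (RInt_minus f g a b). Qed.

Lemma RInt_scal_R (f : R -> R) c a b : ex_RInt f a b ->
  RInt (fun x => c * f x) a b = c * RInt f a b.
Proof. exact (RInt_scal f a b c). Qed.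

Lemma ex_RInt_scal_R (f : R -> R) c a b : ex_RInt f a b -> ex_RInt (fun x => c * f x) a b.
Proof. exact (ex_RInt_scal f a b c). Qed.

Lemma RInt_Chasles_R (f : R -> R) a b c : ex_RInt f a b -> ex_RInt f b c ->
  RInt f a b + RInt f b c = RInt f a c.
Proof. exact (RInt_Chasles f a b c). Qed.

Lemma RInt_swap_R (f : R -> R) a b : ex_RInt f a b -> RInt f b a = - RInt f a b.
Proof. intros H. symmetry. exact (opp_RInt_swap f a b H). Qed.

Lemma RInt_const_R c a b : RInt (fun _ => c) a b = (b - a) * c.
Proof. exact (RInt_const a b c). Qed.

Lemma RInt_shift (f : R -> R) a b v : (forall x, continuity_pt f x) ->
  RInt (fun y => f (y + v)) a b = RInt f (a + v) (b + v).
Proof.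
  intros Hc. rewrite <- (Rmult_1_l a), <- (Rmult_1_l b) at 2.
  rewrite <- RInt_comp_lin by (apply ex_RInt_continuous_R, Hc).
  apply RInt_ext. intros x _. unfold scal; simpl; unfold mult; simpl.
  rewrite Rmult_1_l, Rmult_1_l; reflexivity.
Qed.

Lemma RInt_odd (f : R -> R) N : (forall x, continuity_pt f x) ->
  (forall x, f (- x) = - f x) -> RInt f (- N) N = 0.
Proof.
  intros Hc Ho.
  assert (H := RInt_comp_lin f (-1) 0 (- N) N (ex_RInt_continuous_R f _ _ Hc)).
  replace (-1 * - N + 0) with N in H by ring.
  replace (-1 * N + 0) with (- N) in H by ring.
  rewrite (RInt_ext _ f) in H.
  2: { intros x _. unfold scal; simpl; unfold mult; simpl.
       replace (-1 * x + 0) with (- x) by ring. rewrite Ho. ring. }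
  assert (E := RInt_swap_R f (- N) N (ex_RInt_continuous_R f _ _ Hc)).
  change (RInt f (- N) N = RInt f N (- N)) in H. lra.
Qed.

(** * Series of functions with a geometric majorant *)

Section GeometricMajorant.

Variables (C r : R).
Hypothesis Hr : 0 < r < 1.

Lemma ex_series_scal_geom c : ex_series (fun n => c * r ^ n).
Proof.
  exists (c * / (1 - r)). apply (is_series_scal_l c (fun n => r ^ n)).
  apply is_series_geom. rewrite Rabs_pos_eq; lra.
Qed.

Lemma ex_series_geom_majorant (a : nat -> R) :
  (forall n, Rabs (a n) <= C * r ^ n) -> ex_series a.
Proof. intros Ha. exact (ex_series_le a _ Ha (ex_series_scal_geom C)). Qed.

Lemma Series_tail_geom_majorant (a : nat -> R) N :
  (forall n, Rabs (a n) <= C * r ^ n) ->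
  Rabs (Series a - sum_f_R0 a N) <= C * r ^ S N / (1 - r).
Proof.
  intros Ha.
  assert (Hr1 : Rabs r < 1) by (rewrite Rabs_pos_eq; lra).
  assert (Htail : forall k, Rabs (a (S N + k)%nat) <= C * r ^ S N * r ^ k).
  { intro k. rewrite Rmult_assoc, <- pow_add. apply Ha. }
  rewrite (Series_incr_n a (S N)) by (lia || now apply ex_series_geom_majorant). simpl pred.
  replace (sum_f_R0 a N + Series (fun k => a (S N + k)%nat) - sum_f_R0 a N)
    with (Series (fun k => a (S N + k)%nat)) by ring.
  eapply Rle_trans; [apply Series_Rabs |].
  - apply (@ex_series_le _ R_CompleteNormedModule _ (fun k => C * r ^ S N * r ^ k)).
    + intro k. unfold norm; simpl. rewrite Rabs_Rabsolu. apply Htail.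
    + apply ex_series_scal_geom.
  - eapply Rle_trans; [apply Series_le |].
    + intro k. split; [apply Rabs_pos | apply Htail].
    + apply ex_series_scal_geom.
    + rewrite Series_scal_l, Series_geom by exact Hr1. unfold Rdiv. lra.
Qed.

Lemma geom_tail_small eps : 0 < eps ->
  exists N, forall n, (N <= n)%nat -> C * r ^ S n / (1 - r) < eps.
Proof.
  intros He.
  assert (Hlim : is_lim_seq (fun n => C * r / (1 - r) * r ^ n) 0).
  { replace (Finite 0) with (Rbar_mult (C * r / (1 - r)) 0) by (simpl; f_equal; ring).
    apply is_lim_seq_scal_l, is_lim_seq_geom. rewrite Rabs_pos_eq; lra. }
  destruct (proj2 (is_lim_seq_spec _ _) Hlim (mkposreal eps He)) as [N HN].
  exists N. intros n Hn. specialize (HN n Hn). simpl in HN.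
  replace (C * r ^ S n / (1 - r)) with (C * r / (1 - r) * r ^ n) by (simpl; field; lra).
  apply Rabs_lt_between in HN. lra.
Qed.

End GeometricMajorant.

Lemma continuity_pt_sum_f_R0 (f : nat -> R -> R) N x :
  (forall n, continuity_pt (f n) x) ->
  continuity_pt (fun u => sum_f_R0 (fun n => f n u) N) x.
Proof.
  intros Hc. induction N as [|N IH]; simpl; [apply Hc | apply continuity_pt_plus; auto].
Qed.

Lemma RInt_sum_f_R0 (f : nat -> R -> R) a b N :
  (forall n x, continuity_pt (f n) x) ->
  RInt (fun x => sum_f_R0 (fun n => f n x) N) a b = sum_f_R0 (fun n => RInt (f n) a b) N.
Proof.
  intros Hc. induction N as [|N IH]; simpl; [reflexivity |].
  rewrite RInt_plus_R, IH; [reflexivity | |]; apply ex_RInt_continuous_R; auto.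
  intro x. apply continuity_pt_sum_f_R0. auto.
Qed.

Definition geom_majorant (f : nat -> R -> R) (r : R) :=
  forall X, 0 <= X -> exists C, forall n x, Rabs x <= X -> Rabs (f n x) <= C * r ^ n.

Section SeriesOfFunctions.

Variables (f : nat -> R -> R) (r : R).
Hypothesis Hr : 0 < r < 1.
Hypothesis Hcont : forall n x, continuity_pt (f n) x.
Hypothesis Hmaj : geom_majorant f r.

Lemma ex_series_geom_majorant_fun x : ex_series (fun n => f n x).
Proof.
  destruct (Hmaj (Rabs x) (Rabs_pos x)) as [C HC].
  apply (ex_series_geom_majorant C r Hr). intro n. apply HC. lra.
Qed.

Lemma continuity_pt_Series x : continuity_pt (fun u => Series (fun n => f n u)) x.
Proof.
  destruct (Hmaj (Rabs x + 1) ltac:(pose proof (Rabs_pos x); lra)) as [C HC].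
  assert (Htail : forall u N, Rabs (u - x) < 1 ->
    Rabs (Series (fun n => f n u) - sum_f_R0 (fun n => f n u) N) <= C * r ^ S N / (1 - r)).
  { intros u N Hu. apply Series_tail_geom_majorant; [exact Hr |].
    intro n. apply HC. pose proof (Rabs_triang_inv u x). lra. }
  apply continuity_pt_locally. intros eps.
  assert (He3 : 0 < eps / 3) by (pose proof (cond_pos eps); lra).
  destruct (geom_tail_small C r Hr (eps / 3) He3) as [N HN].
  specialize (HN N (Nat.le_refl _)).
  pose proof (proj1 (continuity_pt_locally _ x)
    (continuity_pt_sum_f_R0 f N x (fun n => Hcont n x)) (mkposreal _ He3)) as Hsum.
  assert (Hnear : locally x (fun u => Rabs (u - x) < 1)).
  { exists (mkposreal 1 Rlt_0_1). intros y Hy. apply Hy. }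
  generalize (filter_and _ _ Hsum Hnear). apply filter_imp.
  intros u [Hu1 Hu2]. simpl in Hu1.
  assert (Tu := Htail u N Hu2).
  assert (Tx := Htail x N ltac:(rewrite Rminus_diag, Rabs_R0; lra)).
  set (su := Series (fun n => f n u)) in *. set (sx := Series (fun n => f n x)) in *.
  set (pu := sum_f_R0 (fun n => f n u) N) in *. set (px := sum_f_R0 (fun n => f n x) N) in *.
  replace (su - sx) with ((su - pu) + (pu - px) + - (sx - px)) by ring.
  pose proof (Rabs_triang ((su - pu) + (pu - px)) (- (sx - px))).
  pose proof (Rabs_triang (su - pu) (pu - px)).
  rewrite Rabs_Ropp in *. simpl. lra.
Qed.

Lemma is_series_RInt a b : a <= b ->
  is_series (fun n => RInt (f n) a b) (RInt (fun u => Series (fun n => f n u)) a b).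
Proof.
  intros Hab.
  set (X := Rmax (Rabs a) (Rabs b)).
  assert (HX : 0 <= X)
    by (pose proof (Rabs_pos a); pose proof (Rmax_l (Rabs a) (Rabs b)); unfold X; lra).
  destruct (Hmaj X HX) as [C HC].
  assert (Hin : forall t, a <= t <= b -> Rabs t <= X).
  { intros t Ht. apply Rabs_le. unfold X.
    pose proof (Rmax_l (Rabs a) (Rabs b)). pose proof (Rmax_r (Rabs a) (Rabs b)).
    pose proof (proj1 (Rabs_le_between a _) (Rle_refl _)).
    pose proof (proj1 (Rabs_le_between b _) (Rle_refl _)). lra. }
  assert (Hpart : forall N x, continuity_pt (fun u => sum_f_R0 (fun n => f n u) N) x)
    by (intros; apply continuity_pt_sum_f_R0; auto).
  apply is_series_Reals. intros eps Heps.
  destruct (geom_tail_small C r Hr (eps / (b - a + 1))) as [N HN].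
  { apply Rdiv_lt_0_compat; lra. }
  exists N. intros n Hn. unfold Rdist.
  rewrite <- RInt_sum_f_R0, <- RInt_minus_R by
    (exact Hcont || apply ex_RInt_continuous_R, Hpart
     || apply ex_RInt_continuous_R, continuity_pt_Series).
  assert (HM : forall t, a <= t <= b ->
    Rabs (sum_f_R0 (fun k => f k t) n - Series (fun k => f k t)) <= C * r ^ S n / (1 - r)).
  { intros t Ht. rewrite <- Rabs_Ropp, Ropp_minus_distr.
    apply Series_tail_geom_majorant; [exact Hr |]. intro k. apply HC, Hin, Ht. }
  eapply Rle_lt_trans; [apply abs_RInt_le_const with (M := C * r ^ S n / (1 - r)) |]; auto.
  { apply ex_RInt_continuous_R; intro x.
    apply continuity_pt_minus; [apply Hpart | apply continuity_pt_Series]. }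
  assert (0 <= C * r ^ S n / (1 - r)) by (eapply Rle_trans; [apply Rabs_pos | apply (HM a); lra]).
  specialize (HN n Hn).
  apply Rmult_lt_compat_r with (r := b - a + 1) in HN; [| lra].
  replace (eps / (b - a + 1) * (b - a + 1)) with eps in HN by (field; lra). nra.
Qed.

End SeriesOfFunctions.

Lemma Series_zero : Series (fun _ => 0) = 0.
Proof.
  rewrite (Series_ext _ (fun _ => 0 * 0)) by (intro; ring).
  rewrite Series_scal_l. ring.
Qed.

Lemma Series_nonneg (a : nat -> R) : ex_series a -> (forall n, 0 <= a n) -> 0 <= Series a.
Proof.
  intros Hex Ha. rewrite <- Series_zero.
  apply Series_le; [intro n; split; [lra | apply Ha] | exact Hex].
Qed.

Lemma is_series_single (a : nat -> R) j : (forall n, n <> j -> a n = 0) -> is_series a (a j).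
Proof.
  intros Ha. apply is_series_Reals. intros eps Heps. exists j. intros N HN.
  enough (E : sum_f_R0 a N = a j) by (unfold Rdist; rewrite E, Rminus_diag, Rabs_R0; lra).
  induction N as [|N IH]; simpl.
  - assert (j = 0)%nat by lia. now subst.
  - destruct (Nat.eq_dec j (S N)) as [-> | Hne].
    + rewrite (sum_eq_R0 a N (fun n Hn => Ha n ltac:(lia))). ring.
    + rewrite IH, (Ha (S N)) by lia. ring.
Qed.

Definition ex_zsum (g : Z -> R) :=
  ex_series (fun n => g (Z.of_nat n)) /\ ex_series (fun n => g (- Z.of_nat (S n))%Z).

Lemma zsum_R_ext (f g : Z -> R) : (forall s, f s = g s) -> zsum_R f = zsum_R g.
Proof. intros H. unfold zsum_R. f_equal; apply Series_ext; intro; apply H. Qed.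

Lemma zsum_R_scal c (f : Z -> R) : zsum_R (fun s => c * f s) = c * zsum_R f.
Proof. unfold zsum_R. rewrite !Series_scal_l. ring. Qed.

Lemma zsum_R_plus (f g : Z -> R) : ex_zsum f -> ex_zsum g ->
  zsum_R (fun s => f s + g s) = zsum_R f + zsum_R g.
Proof.
  intros [Hf1 Hf2] [Hg1 Hg2]. unfold zsum_R. rewrite !Series_plus by assumption. ring.
Qed.

Lemma is_series_zero (a : nat -> R) : (forall n, a n = 0) -> is_series a 0.
Proof.
  intros Ha. apply (is_series_ext (fun _ => 0)); [intro n; now rewrite Ha |].
  exact (is_series_single (fun _ => 0) 0 (fun _ _ => eq_refl)).
Qed.

Lemma zsum_R_delta (g : Z -> R) k :
  ex_zsum (fun s => if Z.eq_dec s k then g s else 0) /\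
  zsum_R (fun s => if Z.eq_dec s k then g s else 0) = g k.
Proof.
  set (d := fun s => if Z.eq_dec s k then g s else 0).
  assert (Hdk : d k = g k) by (unfold d; destruct (Z.eq_dec k k); congruence).
  assert (Hd : forall s, s <> k -> d s = 0)
    by (intros s Hs; unfold d; destruct (Z.eq_dec s k); congruence).
  enough (H : exists v1 v2, is_series (fun n => d (Z.of_nat n)) v1 /\
                            is_series (fun n => d (- Z.of_nat (S n))%Z) v2 /\ v1 + v2 = g k).
  { destruct H as (v1 & v2 & H1 & H2 & E). split; [split; eexists; eassumption |].
    unfold zsum_R. now rewrite (is_series_unique _ _ H1), (is_series_unique _ _ H2). }
  destruct (Z_le_gt_dec 0 k) as [Hk | Hk].
  - exists (d k), 0. split; [| split].
    + replace (d k) with (d (Z.of_nat (Z.to_nat k))) by (now rewrite Z2Nat.id).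
      apply (is_series_single (fun n => d (Z.of_nat n))). intros n Hn. apply Hd. lia.
    + apply is_series_zero. intro n. apply Hd. lia.
    + rewrite Hdk. ring.
  - exists 0, (d k). split; [| split].
    + apply is_series_zero. intro n. apply Hd. lia.
    + replace (d k) with (d (- Z.of_nat (S (Z.to_nat (- k - 1))))%Z) by (f_equal; lia).
      apply (is_series_single (fun n => d (- Z.of_nat (S n))%Z)). intros n Hn. apply Hd. lia.
    + rewrite Hdk. ring.
Qed.

Lemma zsum_R_shift (g : Z -> R) : ex_zsum g -> zsum_R (fun s => g (s + 1)%Z) = zsum_R g.
Proof.
  intros [Hpos Hneg]. unfold zsum_R.
  assert (Hneg' : ex_series (fun n => g (- Z.of_nat n)%Z)).
  { apply ex_series_incr_1. apply (ex_series_ext _ _ (fun n => eq_refl) Hneg). }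
  rewrite (Series_ext (fun n => g (Z.of_nat n + 1)%Z) (fun n => g (Z.of_nat (S n))))
    by (intro; f_equal; lia).
  rewrite (Series_ext (fun n => g (- Z.of_nat (S n) + 1)%Z) (fun n => g (- Z.of_nat n)%Z))
    by (intro; f_equal; lia).
  rewrite (Series_incr_1 _ Hpos), (Series_incr_1 _ Hneg'). simpl. ring.
Qed.

Lemma zsum_R_odd (g : Z -> R) : (forall s, g (- s)%Z = - g s) -> zsum_R g = 0.
Proof.
  intros Hodd. unfold zsum_R.
  assert (H0 : g 0%Z = 0) by (pose proof (Hodd 0%Z); simpl in *; lra).
  rewrite (Series_incr_1_aux (fun n => g (Z.of_nat n))) by exact H0.
  rewrite (Series_ext (fun n => g (- Z.of_nat (S n))%Z) (fun n => - g (Z.of_nat (S n))))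
      by (intro; apply Hodd).
  rewrite Series_opp. ring.
Qed.

Lemma is_lim_seq_zsum_R (g : Z -> R) : ex_zsum g ->
  is_lim_seq (fun N => sum_f_R0 (fun n => g (Z.of_nat n) + g (- Z.of_nat (S n))%Z) N) (zsum_R g).
Proof.
  intros [Hpos Hneg].
  assert (Hlim : forall a, ex_series a -> is_lim_seq (fun N => sum_f_R0 a N) (Series a)).
  { intros a Ha. apply (is_lim_seq_ext (sum_n a)); [intro; apply sum_n_Reals |].
    apply Series_correct, Ha. }
  apply (is_lim_seq_ext (fun N => sum_f_R0 (fun n => g (Z.of_nat n)) N
                                 + sum_f_R0 (fun n => g (- Z.of_nat (S n))%Z) N)).
  { intro N. symmetry. apply sum_plus. }
  apply is_lim_seq_plus'; apply Hlim; assumption.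
Qed.

Lemma zsum_R_pos (g : Z -> R) : ex_zsum g -> (forall s, 0 < g s) -> 0 < zsum_R g.
Proof.
  intros [Hpos Hneg] Hg. unfold zsum_R. rewrite (Series_incr_1 _ Hpos).
  assert (0 <= Series (fun n => g (Z.of_nat (S n)))).
  { apply Series_nonneg; [now apply (ex_series_incr_1 (fun n => g (Z.of_nat n))) |].
    intro; left; apply Hg. }
  assert (0 <= Series (fun n => g (- Z.of_nat (S n))%Z)).
  { apply Series_nonneg; [exact Hneg | intro; left; apply Hg]. }
  pose proof (Hg (Z.of_nat 0)). lra.
Qed.

Definition zgeom_majorant (f : Z -> R -> R) (r : R) :=
  forall X, 0 <= X -> exists C, forall s x, Rabs x <= X -> Rabs (f s x) <= C * r ^ Z.abs_nat s.

Lemma zgeom_majorant_mul (f : Z -> R -> R) r (phi : R -> R) :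
  zgeom_majorant f r -> (forall x, Rabs (phi x) <= 1) ->
  zgeom_majorant (fun s x => f s x * phi x) r.
Proof.
  intros Hf Hphi X HX. destruct (Hf X HX) as [C HC]. exists C. intros s x Hx.
  rewrite Rabs_mult. specialize (HC s x Hx). pose proof (Hphi x).
  pose proof (Rabs_pos (f s x)). pose proof (Rabs_pos (phi x)). nra.
Qed.

Section TwoSidedSeriesOfFunctions.

Variables (f : Z -> R -> R) (r : R).
Hypothesis Hr : 0 < r < 1.
Hypothesis Hcont : forall s x, continuity_pt (f s) x.
Hypothesis Hmaj : zgeom_majorant f r.

Lemma geom_majorant_nonneg_part : geom_majorant (fun n => f (Z.of_nat n)) r.
Proof.
  intros X HX. destruct (Hmaj X HX) as [C HC]. exists C. intros n x Hx.
  rewrite <- (Zabs2Nat.id n) at 2. apply HC, Hx.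
Qed.

Lemma geom_majorant_neg_part : geom_majorant (fun n => f (- Z.of_nat (S n))%Z) r.
Proof.
  intros X HX. destruct (Hmaj X HX) as [C HC]. exists (C * r). intros n x Hx.
  rewrite Rmult_assoc. change (r * r ^ n) with (r ^ S n).
  replace (r ^ S n) with (r ^ Z.abs_nat (- Z.of_nat (S n))) by (f_equal; lia). apply HC, Hx.
Qed.

Lemma ex_zsum_geom_majorant x : ex_zsum (fun s => f s x).
Proof.
  split.
  - exact (ex_series_geom_majorant_fun _ r Hr geom_majorant_nonneg_part x).
  - exact (ex_series_geom_majorant_fun _ r Hr geom_majorant_neg_part x).
Qed.

Lemma continuity_pt_zsum x : continuity_pt (fun u => zsum_R (fun s => f s u)) x.
Proof.
  apply continuity_pt_plus.
  - exact (continuity_pt_Series _ r Hr (fun n => Hcont _) geom_majorant_nonneg_part x).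
  - exact (continuity_pt_Series _ r Hr (fun n => Hcont _) geom_majorant_neg_part x).
Qed.

Lemma ex_zsum_RInt a b : a <= b -> ex_zsum (fun s => RInt (f s) a b).
Proof.
  intros Hab. split; eexists.
  - exact (is_series_RInt _ r Hr (fun n => Hcont _) geom_majorant_nonneg_part a b Hab).
  - exact (is_series_RInt _ r Hr (fun n => Hcont _) geom_majorant_neg_part a b Hab).
Qed.

Lemma RInt_zsum a b : a <= b ->
  RInt (fun u => zsum_R (fun s => f s u)) a b = zsum_R (fun s => RInt (f s) a b).
Proof.
  intros Hab. unfold zsum_R. rewrite RInt_plus_R.
  - f_equal; symmetry; apply is_series_unique.
    + exact (is_series_RInt _ r Hr (fun n => Hcont _) geom_majorant_nonneg_part a b Hab).
    + exact (is_series_RInt _ r Hr (fun n => Hcont _) geom_majorant_neg_part a b Hab).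
  - exact (ex_RInt_continuous_R _ a b
             (continuity_pt_Series _ r Hr (fun n => Hcont _) geom_majorant_nonneg_part)).
  - exact (ex_RInt_continuous_R _ a b
             (continuity_pt_Series _ r Hr (fun n => Hcont _) geom_majorant_neg_part)).
Qed.

End TwoSidedSeriesOfFunctions.

(** * The Gaussian cosine integral *)

Definition gauss (A u : R) := exp (- (A * u ^ 2)).

Lemma gauss_pos A u : 0 < gauss A u.
Proof. apply exp_pos. Qed.

Lemma gauss_even A u : gauss A (- u) = gauss A u.
Proof. unfold gauss. f_equal. ring. Qed.

Lemma continuity_pt_gauss A x : continuity_pt (gauss A) x.
Proof. unfold gauss. solve_continuity. Qed.

Definition gauss_cos_RInt (A N w : R) := RInt (fun u => gauss A u * cos (w * u)) (- N) N.

Lemma is_derive_gauss_cos_RInt_param A N w :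
  is_derive (gauss_cos_RInt A N) w (RInt (fun u => gauss A u * (- sin (w * u) * u)) (- N) N).
Proof.
  assert (HD : forall z u, Derive (fun z => gauss A u * cos (z * u)) z
      = gauss A u * (- sin (z * u) * u)).
  { intros z u. apply is_derive_unique. auto_derive; auto. ring. }
  assert (H := is_derive_RInt_param (fun z u => gauss A u * cos (z * u)) (- N) N w).
  rewrite (RInt_ext_R _ (fun u => gauss A u * (- sin (w * u) * u))) in H by (intros; apply HD).
  apply H.
  - exists (mkposreal 1 Rlt_0_1). intros y _ t _. auto_derive; auto.
  - intros t _. apply (continuity_2d_pt_ext (fun z u => gauss A u * (- sin (z * u) * u))).
    { intros z u. now rewrite HD. }
    apply continuity_2d_pt_mult; [| apply continuity_2d_pt_mult; [apply continuity_2d_pt_opp |]].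
    + apply (continuity_1d_2d_pt_comp (gauss A) (fun _ u => u)).
      * apply continuity_pt_gauss.
      * apply continuity_2d_pt_id2.
    + apply (continuity_1d_2d_pt_comp sin (fun z u => z * u)); [solve_continuity |].
      apply continuity_2d_pt_mult; [apply continuity_2d_pt_id1 | apply continuity_2d_pt_id2].
    + apply continuity_2d_pt_id2.
  - exists (mkposreal 1 Rlt_0_1). intros y _. apply ex_RInt_continuous_R. intro x.
    apply continuity_pt_mult; [apply continuity_pt_gauss | solve_continuity].
Qed.

(* Integration by parts against the primitive [gauss A u * sin (w * u)]. *)
Lemma RInt_gauss_sin_mul_id A N w : A <> 0 ->
  RInt (fun u => gauss A u * (- sin (w * u) * u)) (- N) N
  = (2 * gauss A N * sin (w * N) - w * gauss_cos_RInt A N w) / (2 * A).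
Proof.
  intros HA.
  set (P := fun u => gauss A u * sin (w * u)).
  set (dP := fun u => gauss A u * (- (2 * A * u)) * sin (w * u) + gauss A u * (cos (w * u) * w)).
  assert (HdPc : forall u, continuity_pt dP u)
    by (intro; unfold dP; apply continuity_pt_plus; apply continuity_pt_mult;
        try apply continuity_pt_mult; try apply continuity_pt_gauss; solve_continuity).
  assert (HgC : forall u, continuity_pt (fun u => gauss A u * cos (w * u)) u)
    by (intro; apply continuity_pt_mult; [apply continuity_pt_gauss | solve_continuity]).
  assert (HP : RInt dP (- N) N = P N - P (- N)).
  { apply is_RInt_unique, (is_RInt_derive P dP).
    - intros x _. unfold P, dP, gauss. auto_derive; auto.
      replace (x * (x * 1)) with (x ^ 2) by ring. ring.
    - intros x _. apply continuity_pt_filterlim, HdPc. }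
  rewrite (RInt_ext_R _ (fun u => / (2 * A) * (dP u - w * (gauss A u * cos (w * u))))).
  2: { intros x _. unfold dP. field. exact HA. }
  rewrite RInt_scal_R, RInt_minus_R, RInt_scal_R, HP.
  - unfold gauss_cos_RInt, P. rewrite gauss_even.
    replace (w * - N) with (- (w * N)) by ring. rewrite sin_neg. R_eq. field. exact HA.
  - apply ex_RInt_continuous_R, HgC.
  - apply ex_RInt_continuous_R, HdPc.
  - apply ex_RInt_scal_R, ex_RInt_continuous_R, HgC.
  - apply ex_RInt_continuous_R. intro. apply continuity_pt_minus; [apply HdPc |].
    apply continuity_pt_scal, HgC.
Qed.

(* Multiplying by [exp (w ^ 2 / (4 * A))] cancels the term of the derivative that is
   proportional to [gauss_cos_RInt A N w], leaving only the boundary term. *)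
Lemma is_derive_gauss_cos_RInt_scaled A N c : 0 < A ->
  is_derive (fun w => exp (w ^ 2 / (4 * A)) * gauss_cos_RInt A N w) c
            (exp (c ^ 2 / (4 * A)) * gauss A N * sin (c * N) / A).
Proof.
  intros HA.
  assert (HJ := is_derive_gauss_cos_RInt_param A N c).
  rewrite RInt_gauss_sin_mul_id in HJ by lra.
  assert (HE : is_derive (fun w => exp (w ^ 2 / (4 * A))) c
                         (exp (c ^ 2 / (4 * A)) * (2 * c / (4 * A)))).
  { auto_derive; [exact I |].
    replace (c * (c * 1) * / (4 * A)) with (c ^ 2 / (4 * A)) by (unfold Rdiv; ring). field. lra. }
  assert (H := is_derive_mult _ _ c _ _ HE HJ Rmult_comm).
  eapply is_derive_ext; [intro; reflexivity |].
  replace (exp (c ^ 2 / (4 * A)) * gauss A N * sin (c * N) / A)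
    with (plus (mult (exp (c ^ 2 / (4 * A)) * (2 * c / (4 * A))) (gauss_cos_RInt A N c))
               (mult (exp (c ^ 2 / (4 * A)))
                     ((2 * gauss A N * sin (c * N) - c * gauss_cos_RInt A N c) / (2 * A)))).
  - exact H.
  - unfold plus, mult; simpl. field. lra.
Qed.

Lemma gauss_cos_RInt_bound A N w : 0 < A ->
  Rabs (exp (w ^ 2 / (4 * A)) * gauss_cos_RInt A N w - gauss_cos_RInt A N 0)
  <= Rabs w * exp (w ^ 2 / (4 * A)) * gauss A N / A.
Proof.
  intros HA.
  set (K := fun w => exp (w ^ 2 / (4 * A)) * gauss_cos_RInt A N w).
  destruct (MVT_gen K 0 w (fun c => exp (c ^ 2 / (4 * A)) * gauss A N * sin (c * N) / A))
    as [c [Hc Hmvt]].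
  { intros x _. apply is_derive_gauss_cos_RInt_scaled, HA. }
  { intros x _. apply continuity_pt_filterlim, (@ex_derive_continuous R_AbsRing R_NormedModule).
    eexists. apply is_derive_gauss_cos_RInt_scaled, HA. }
  assert (HK0 : K 0 = gauss_cos_RInt A N 0).
  { unfold K. replace (0 ^ 2 / (4 * A)) with 0 by (field; lra). rewrite exp_0. ring. }
  fold (K w). rewrite <- HK0, Hmvt, Rminus_0_r.
  assert (Hcw : c ^ 2 <= w ^ 2)
    by (revert Hc; unfold Rmin, Rmax; destruct (Rle_dec 0 w); intros; nra).
  set (B := exp (c ^ 2 / (4 * A)) * gauss A N / A).
  assert (HB0 : 0 < B)
    by (apply Rdiv_lt_0_compat; [apply Rmult_lt_0_compat; [apply exp_pos | apply gauss_pos] | lra]).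
  assert (HB : B <= exp (w ^ 2 / (4 * A)) * gauss A N / A).
  { unfold B, Rdiv. apply Rmult_le_compat_r; [left; apply Rinv_0_lt_compat, HA |].
    apply Rmult_le_compat_r; [left; apply gauss_pos |].
    apply exp_le. unfold Rdiv. apply Rmult_le_compat_r; [left; apply Rinv_0_lt_compat |]; lra. }
  replace (exp (c ^ 2 / (4 * A)) * gauss A N * sin (c * N) / A * w) with (B * (sin (c * N) * w))
    by (unfold B; field; lra).
  replace (Rabs w * exp (w ^ 2 / (4 * A)) * gauss A N / A)
    with (exp (w ^ 2 / (4 * A)) * gauss A N / A * Rabs w) by (field; lra).
  rewrite !Rabs_mult, (Rabs_pos_eq B) by lra.
  assert (Hsin : Rabs (sin (c * N)) <= 1) by apply Rabs_le, SIN_bound.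
  apply Rle_trans with (B * Rabs w); [| apply Rmult_le_compat_r; [apply Rabs_pos | exact HB]].
  apply Rmult_le_compat_l; [lra |]. rewrite <- (Rmult_1_l (Rabs w)) at 2.
  apply Rmult_le_compat_r; [apply Rabs_pos | exact Hsin].
Qed.

Lemma gauss_cos_RInt_scaled_lim A w : 0 < A ->
  is_lim_seq (fun n => exp (w ^ 2 / (4 * A)) * gauss_cos_RInt A (INR n + 1) w
                       - gauss_cos_RInt A (INR n + 1) 0) 0.
Proof.
  intros HA. set (M := Rabs w * exp (w ^ 2 / (4 * A)) / A).
  assert (HM : 0 <= M).
  { apply Rmult_le_pos; [apply Rmult_le_pos; [apply Rabs_pos | left; apply exp_pos] |].
    left; apply Rinv_0_lt_compat, HA. }
  apply is_lim_seq_abs_0, (is_lim_seq_le_le (fun _ => 0) _ (fun n => M * exp (- A) ^ n)).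
  - intro n. split; [apply Rabs_pos |].
    eapply Rle_trans; [apply gauss_cos_RInt_bound, HA |].
    replace (Rabs w * exp (w ^ 2 / (4 * A)) * gauss A (INR n + 1) / A)
      with (M * gauss A (INR n + 1)) by (unfold M; field; lra).
    apply Rmult_le_compat_l; [exact HM |].
    unfold gauss. rewrite <- exp_mult_INR. apply exp_le. pose proof (pos_INR n). nra.
  - apply is_lim_seq_const.
  - replace (Finite 0) with (Rbar_mult M 0) by (simpl; f_equal; ring).
    apply is_lim_seq_scal_l, is_lim_seq_geom.
    rewrite Rabs_pos_eq by (left; apply exp_pos). apply exp_neg_lt_1, HA.
Qed.

(** * The periodized Gaussian and its Fourier coefficients *)

Lemma INR_Zabs_nat s : INR (Z.abs_nat s) = Rabs (IZR s).
Proof. now rewrite INR_IZR_INZ, Zabs2Nat.id_abs, abs_IZR. Qed.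

Lemma gauss_le_geom B (s : Z) t : 0 < B ->
  gauss B (IZR s + t) <= exp B * exp (2 * B * Rabs t) * exp (- (2 * B)) ^ Z.abs_nat s.
Proof.
  intros HB. unfold gauss. rewrite <- exp_mult_INR, INR_Zabs_nat, <- !exp_plus. apply exp_le.
  pose proof (Rabs_triang_inv (IZR s) (- t)) as Htri. rewrite Rabs_Ropp in Htri.
  replace (IZR s - - t) with (IZR s + t) in Htri by ring.
  assert (Hsq : 2 * Rabs (IZR s + t) - 1 <= (IZR s + t) ^ 2).
  { rewrite <- pow2_abs. pose proof (pow2_ge_0 (Rabs (IZR s + t) - 1)). nra. }
  nra.
Qed.

Lemma zgeom_majorant_gauss_shift A : 0 < A ->
  zgeom_majorant (fun s x => gauss A (IZR s + x)) (exp (- (2 * A))).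
Proof.
  intros HA X HX. exists (exp A * exp (2 * A * X)). intros s x Hx.
  rewrite Rabs_pos_eq by (left; apply gauss_pos).
  eapply Rle_trans; [apply gauss_le_geom, HA |].
  apply Rmult_le_compat_r; [apply pow_le; left; apply exp_pos |].
  apply Rmult_le_compat_l; [left; apply exp_pos |]. apply exp_le. nra.
Qed.

Lemma periodic_Z (phi : R -> R) : (forall x, phi (x + 1) = phi x) ->
  forall x s, phi (x + IZR s) = phi x.
Proof.
  intros Hp.
  assert (Hnat : forall x n, phi (x + INR n) = phi x).
  { intros x n. induction n as [|n IH]; [simpl; now rewrite Rplus_0_r |].
    rewrite S_INR, <- Rplus_assoc, Hp. exact IH. }
  intros x s. destruct (Z_le_gt_dec 0 s) as [Hs | Hs].
  - rewrite <- (Z2Nat.id s Hs), <- INR_IZR_INZ. apply Hnat.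
  - replace s with (- Z.of_nat (Z.to_nat (- s)))%Z by lia.
    rewrite opp_IZR, <- INR_IZR_INZ, <- (Hnat (x + - INR (Z.to_nat (- s))) (Z.to_nat (- s))).
    f_equal. ring.
Qed.

Lemma sum_RInt_unit_intervals (g : R -> R) N : (forall x, continuity_pt g x) ->
  sum_f_R0 (fun n => RInt g (INR n) (INR n + 1) + RInt g (- INR n - 1) (- INR n)) N
  = RInt g (- (INR N + 1)) (INR N + 1).
Proof.
  intros Hc. assert (Hex : forall a b, ex_RInt g a b) by (intros; apply ex_RInt_continuous_R, Hc).
  induction N as [|N IH].
  - simpl. replace (- 0 - 1) with (- (0 + 1)) by ring. replace (- 0) with 0 by ring.
    rewrite Rplus_comm. apply RInt_Chasles_R; apply Hex.
  - rewrite tech5, IH. cbv beta. rewrite S_INR.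
    rewrite <- (RInt_Chasles_R g (- (INR N + 1 + 1)) (- (INR N + 1)) (INR N + 1 + 1)) by apply Hex.
    rewrite <- (RInt_Chasles_R g (- (INR N + 1)) (INR N + 1) (INR N + 1 + 1)) by apply Hex.
    replace (- (INR N + 1) - 1) with (- (INR N + 1 + 1)) by ring. ring.
Qed.

Definition periodized_gauss (A x : R) := zsum_R (fun s => gauss A (IZR s + x)).

Section PeriodizedGauss.

Variable A : R.
Hypothesis HA : 0 < A.

Let Hr : 0 < exp (- (2 * A)) < 1.
Proof. apply exp_neg_lt_1. lra. Qed.

Lemma continuity_pt_gauss_shift s x : continuity_pt (fun x => gauss A (IZR s + x)) x.
Proof.
  apply (continuity_pt_comp (fun x => IZR s + x) (gauss A));
    [solve_continuity | apply continuity_pt_gauss].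
Qed.

Lemma continuity_pt_periodized_gauss x : continuity_pt (periodized_gauss A) x.
Proof.
  exact (continuity_pt_zsum _ _ Hr continuity_pt_gauss_shift (zgeom_majorant_gauss_shift A HA) x).
Qed.

Lemma periodized_gauss_periodic x : periodized_gauss A (x + 1) = periodized_gauss A x.
Proof.
  unfold periodized_gauss.
  rewrite <- (zsum_R_shift (fun s => gauss A (IZR s + x)))
    by exact (ex_zsum_geom_majorant _ _ Hr (zgeom_majorant_gauss_shift A HA) x).
  apply zsum_R_ext. intro s. rewrite plus_IZR. f_equal. ring.
Qed.

Lemma periodized_gauss_pos x : 0 < periodized_gauss A x.
Proof.
  apply zsum_R_pos; [| intro; apply gauss_pos].
  exact (ex_zsum_geom_majorant _ _ Hr (zgeom_majorant_gauss_shift A HA) x).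
Qed.

Variable phi : R -> R.
Hypothesis Hphi_cont : forall x, continuity_pt phi x.
Hypothesis Hphi_bound : forall x, Rabs (phi x) <= 1.
Hypothesis Hphi_periodic : forall x, phi (x + 1) = phi x.

Let Hgphi_cont x : continuity_pt (fun u => gauss A u * phi u) x.
Proof. apply continuity_pt_mult; [apply continuity_pt_gauss | apply Hphi_cont]. Qed.

Lemma RInt_gauss_shift_mul s :
  RInt (fun x => gauss A (IZR s + x) * phi x) 0 1
  = RInt (fun u => gauss A u * phi u) (IZR s) (IZR s + 1).
Proof.
  rewrite <- (Rplus_0_l (IZR s)) at 1. rewrite (Rplus_comm (IZR s) 1).
  rewrite <- RInt_shift by exact Hgphi_cont.
  apply RInt_ext_R. intros x _. rewrite (periodic_Z phi Hphi_periodic). f_equal. f_equal. ring.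
Qed.

(* Unfolding: one period of the periodization integrates [gauss A] over the whole line. *)
Lemma RInt_periodized_gauss_lim :
  is_lim_seq (fun N => RInt (fun u => gauss A u * phi u) (- (INR N + 1)) (INR N + 1))
             (RInt (fun x => periodized_gauss A x * phi x) 0 1).
Proof.
  set (f := fun s x => gauss A (IZR s + x) * phi x).
  assert (Hfc : forall s x, continuity_pt (f s) x)
    by (intros; apply continuity_pt_mult; [apply continuity_pt_gauss_shift | apply Hphi_cont]).
  assert (Hmaj := zgeom_majorant_mul _ _ phi (zgeom_majorant_gauss_shift A HA) Hphi_bound).
  rewrite (RInt_ext_R _ (fun x => zsum_R (fun s => f s x))).
  2: { intros x _. unfold periodized_gauss, f. rewrite Rmult_comm, <- zsum_R_scal.
       apply zsum_R_ext. intro; ring. }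
  rewrite (RInt_zsum _ _ Hr Hfc Hmaj 0 1 Rle_0_1).
  eapply is_lim_seq_ext; [| apply (is_lim_seq_zsum_R _ (ex_zsum_RInt _ _ Hr Hfc Hmaj 0 1 Rle_0_1))].
  intro N. rewrite <- sum_RInt_unit_intervals by exact Hgphi_cont.
  apply sum_eq. intros n _. unfold f. rewrite !RInt_gauss_shift_mul.
  rewrite opp_IZR, <- !INR_IZR_INZ, S_INR. f_equal; f_equal; ring.
Qed.

End PeriodizedGauss.

Lemma sin_2PI_IZR k : sin (2 * PI * IZR k) = 0.
Proof. apply sin_eq_0_1. exists (2 * k)%Z. rewrite mult_IZR. ring. Qed.

Lemma cos_2PI_IZR k : cos (2 * PI * IZR k) = 1.
Proof.
  replace (2 * PI * IZR k) with (2 * (IZR k * PI)) by ring.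
  rewrite cos_2a_sin, sin_eq_0_1 by (exists k; reflexivity). ring.
Qed.

Lemma cos_2PI_IZR_periodic k x : cos (2 * PI * IZR k * (x + 1)) = cos (2 * PI * IZR k * x).
Proof.
  replace (2 * PI * IZR k * (x + 1)) with (2 * PI * IZR k * x + 2 * PI * IZR k) by ring.
  rewrite cos_plus, cos_2PI_IZR, sin_2PI_IZR. ring.
Qed.

Lemma sin_2PI_IZR_periodic k x : sin (2 * PI * IZR k * (x + 1)) = sin (2 * PI * IZR k * x).
Proof.
  replace (2 * PI * IZR k * (x + 1)) with (2 * PI * IZR k * x + 2 * PI * IZR k) by ring.
  rewrite sin_plus, cos_2PI_IZR, sin_2PI_IZR. ring.
Qed.

Lemma is_lim_seq_unique_R (u : nat -> R) (a b : R) : is_lim_seq u a -> is_lim_seq u b -> a = b.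
Proof.
  intros Ha Hb. apply is_lim_seq_unique in Ha, Hb. rewrite Ha in Hb. now injection Hb.
Qed.

(* The whole-line integral of [gauss A], see [gauss_integral_lim]. *)
Definition gauss_integral (A : R) := RInt (periodized_gauss A) 0 1.

Section PeriodizedGaussCoefficients.

Variable A : R.
Hypothesis HA : 0 < A.

Lemma gauss_cos_RInt_lim w : (forall x, cos (w * (x + 1)) = cos (w * x)) ->
  is_lim_seq (fun N => gauss_cos_RInt A (INR N + 1) w)
             (RInt (fun x => periodized_gauss A x * cos (w * x)) 0 1).
Proof.
  intros Hw. apply (RInt_periodized_gauss_lim A HA (fun x => cos (w * x))).
  - intro; solve_continuity.
  - intro; apply Rabs_le, COS_bound.
  - exact Hw.
Qed.

Lemma gauss_integral_lim : is_lim_seq (fun N => gauss_cos_RInt A (INR N + 1) 0) (gauss_integral A).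
Proof.
  replace (gauss_integral A) with (RInt (fun x => periodized_gauss A x * cos (0 * x)) 0 1).
  - apply gauss_cos_RInt_lim. intro; now rewrite !Rmult_0_l.
  - apply RInt_ext_R. intros. rewrite Rmult_0_l, cos_0. ring.
Qed.

Lemma periodized_gauss_cos_coef k :
  RInt (fun x => periodized_gauss A x * cos (2 * PI * IZR k * x)) 0 1
  = gauss (PI ^ 2 / A) (IZR k) * gauss_integral A.
Proof.
  set (w := 2 * PI * IZR k).
  set (E := exp (w ^ 2 / (4 * A))).
  assert (Hw := gauss_cos_RInt_lim w (cos_2PI_IZR_periodic k)).
  assert (H := is_lim_seq_unique_R _ _ _
                 (is_lim_seq_minus' _ _ _ _ (is_lim_seq_scal_l _ E _ Hw) gauss_integral_lim)
                 (gauss_cos_RInt_scaled_lim A w HA)).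
  assert (HE : gauss (PI ^ 2 / A) (IZR k) * E = 1).
  { unfold gauss, E, w. rewrite <- exp_plus, <- exp_0. f_equal. field. lra. }
  enough (Hc : forall c : R, E * c - gauss_integral A = 0 ->
                             c = gauss (PI ^ 2 / A) (IZR k) * gauss_integral A) by exact (Hc _ H).
  intros c Hc. rewrite <- (Rmult_1_l c), <- HE, Rmult_assoc. f_equal. lra.
Qed.

Lemma periodized_gauss_sin_coef k :
  RInt (fun x => periodized_gauss A x * sin (2 * PI * IZR k * x)) 0 1 = 0.
Proof.
  set (w := 2 * PI * IZR k).
  apply (is_lim_seq_unique_R (fun _ => 0)); [| apply is_lim_seq_const].
  eapply is_lim_seq_ext; [| apply (RInt_periodized_gauss_lim A HA (fun x => sin (w * x)))].
  - intro N. apply RInt_odd.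
    + intro x. apply continuity_pt_mult; [apply continuity_pt_gauss | solve_continuity].
    + intro x. rewrite gauss_even. replace (w * - x) with (- (w * x)) by ring. rewrite sin_neg.
      ring.
  - intro; solve_continuity.
  - intro; apply Rabs_le, SIN_bound.
  - apply sin_2PI_IZR_periodic.
Qed.

End PeriodizedGaussCoefficients.

Definition zdelta (m : Z) : R := if Z.eq_dec m 0 then 1 else 0.

Lemma RInt_cos_2PI_IZR m : RInt (fun x => cos (2 * PI * IZR m * x)) 0 1 = zdelta m.
Proof.
  unfold zdelta. destruct (Z.eq_dec m 0) as [-> | Hm].
  - rewrite (RInt_ext_R _ (fun _ => 1)), RInt_const_R; [R_eq; ring |].
    intros. rewrite Rmult_0_r, Rmult_0_l. apply cos_0.
  - assert (Hm' := not_0_IZR m Hm).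
    erewrite is_RInt_unique.
    2: apply (is_RInt_derive (fun x => sin (2 * PI * IZR m * x) / (2 * PI * IZR m))).
    + rewrite Rmult_1_r, Rmult_0_r, sin_0, sin_2PI_IZR. unfold minus, plus, opp; simpl.
      field. split; [exact Hm' | exact PI_neq0].
    + intros x _. auto_derive; [auto |]. field. split; [exact Hm' | exact PI_neq0].
    + intros x _. apply continuity_pt_filterlim. solve_continuity.
Qed.

Lemma RInt_sin_2PI_IZR m : RInt (fun x => sin (2 * PI * IZR m * x)) 0 1 = 0.
Proof.
  destruct (Z.eq_dec m 0) as [-> | Hm].
  - rewrite (RInt_ext_R _ (fun _ => 0)), RInt_const_R; [R_eq; ring |].
    intros. rewrite Rmult_0_r, Rmult_0_l. apply sin_0.
  - assert (Hm' := not_0_IZR m Hm).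
    erewrite is_RInt_unique.
    2: apply (is_RInt_derive (fun x => - cos (2 * PI * IZR m * x) / (2 * PI * IZR m))).
    + rewrite Rmult_1_r, Rmult_0_r, cos_0, cos_2PI_IZR. unfold minus, plus, opp; simpl.
      field. split; [exact Hm' | exact PI_neq0].
    + intros x _. auto_derive; [auto |]. field. split; [exact Hm' | exact PI_neq0].
    + intros x _. apply continuity_pt_filterlim. solve_continuity.
Qed.

Lemma RInt_cos_cos_2PI_IZR s k :
  RInt (fun x => cos (2 * PI * IZR s * x) * cos (2 * PI * IZR k * x)) 0 1
  = (zdelta (s - k) + zdelta (s + k)) / 2.
Proof.
  assert (Hc : forall m, ex_RInt (fun x => cos (2 * PI * IZR m * x)) 0 1)
    by (intros; apply ex_RInt_continuous_R; intro; solve_continuity).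
  rewrite (RInt_ext_R _ (fun x => / 2 * cos (2 * PI * IZR (s - k) * x)
                                 + / 2 * cos (2 * PI * IZR (s + k) * x))).
  2: { intros x _. rewrite minus_IZR, plus_IZR.
       replace (2 * PI * (IZR s - IZR k) * x) with (2 * PI * IZR s * x - 2 * PI * IZR k * x)
           by ring.
       replace (2 * PI * (IZR s + IZR k) * x) with (2 * PI * IZR s * x + 2 * PI * IZR k * x)
           by ring.
       rewrite cos_minus, cos_plus. field. }
  rewrite RInt_plus_R, !RInt_scal_R, !RInt_cos_2PI_IZR;
    [R_eq; field | apply Hc | apply Hc | apply ex_RInt_scal_R, Hc | apply ex_RInt_scal_R, Hc].
Qed.

Lemma RInt_cos_sin_2PI_IZR s k :
  RInt (fun x => cos (2 * PI * IZR s * x) * sin (2 * PI * IZR k * x)) 0 1 = 0.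
Proof.
  assert (Hs : forall m, ex_RInt (fun x => sin (2 * PI * IZR m * x)) 0 1)
    by (intros; apply ex_RInt_continuous_R; intro; solve_continuity).
  rewrite (RInt_ext_R _ (fun x => / 2 * sin (2 * PI * IZR (k + s) * x)
                                 + / 2 * sin (2 * PI * IZR (k - s) * x))).
  2: { intros x _. rewrite minus_IZR, plus_IZR.
       replace (2 * PI * (IZR k + IZR s) * x) with (2 * PI * IZR k * x + 2 * PI * IZR s * x)
           by ring.
       replace (2 * PI * (IZR k - IZR s) * x) with (2 * PI * IZR k * x - 2 * PI * IZR s * x)
           by ring.
       rewrite sin_minus, sin_plus. field. }
  rewrite RInt_plus_R, !RInt_scal_R, !RInt_sin_2PI_IZR;
    [R_eq; ring | apply Hs | apply Hs | apply ex_RInt_scal_R, Hs | apply ex_RInt_scal_R, Hs].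
Qed.

Definition dual_gauss_series (A x : R) :=
  zsum_R (fun s => gauss (PI ^ 2 / A) (IZR s) * cos (2 * PI * IZR s * x)).

Lemma zgeom_majorant_gauss_cos B : 0 < B ->
  zgeom_majorant (fun s x => gauss B (IZR s) * cos (2 * PI * IZR s * x)) (exp (- (2 * B))).
Proof.
  intros HB X HX. exists (exp B * exp (2 * B * Rabs 0)). intros s x _.
  rewrite Rabs_mult, (Rabs_pos_eq (gauss B _)) by (left; apply gauss_pos).
  rewrite <- (Rmult_1_r (_ * _ ^ _)). apply Rmult_le_compat.
  - left; apply gauss_pos.
  - apply Rabs_pos.
  - rewrite <- (Rplus_0_r (IZR s)) at 1. apply gauss_le_geom, HB.
  - apply Rabs_le, COS_bound.
Qed.

Section DualGaussSeries.

Variable A : R.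
Hypothesis HA : 0 < A.

Let HB : 0 < PI ^ 2 / A.
Proof. apply Rdiv_lt_0_compat; [apply pow_lt, PI_RGT_0 | exact HA]. Qed.

Let Hr : 0 < exp (- (2 * (PI ^ 2 / A))) < 1.
Proof. apply exp_neg_lt_1. lra. Qed.

Let Hcont s x : continuity_pt (fun x => gauss (PI ^ 2 / A) (IZR s) * cos (2 * PI * IZR s * x)) x.
Proof. solve_continuity. Qed.

Lemma continuity_pt_dual_gauss_series x : continuity_pt (dual_gauss_series A) x.
Proof. exact (continuity_pt_zsum _ _ Hr Hcont (zgeom_majorant_gauss_cos _ HB) x). Qed.

Lemma dual_gauss_series_periodic x : dual_gauss_series A (x + 1) = dual_gauss_series A x.
Proof.
  apply zsum_R_ext. intro s. now rewrite cos_2PI_IZR_periodic.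
Qed.

Lemma RInt_dual_gauss_series_mul psi :
  (forall x, continuity_pt psi x) -> (forall x, Rabs (psi x) <= 1) ->
  RInt (fun x => dual_gauss_series A x * psi x) 0 1
  = zsum_R (fun s => gauss (PI ^ 2 / A) (IZR s)
                     * RInt (fun x => cos (2 * PI * IZR s * x) * psi x) 0 1).
Proof.
  intros Hpsi_cont Hpsi_bound.
  set (f := fun s x => gauss (PI ^ 2 / A) (IZR s) * cos (2 * PI * IZR s * x) * psi x).
  assert (Hfc : forall s x, continuity_pt (f s) x)
    by (intros; apply continuity_pt_mult; [apply Hcont | apply Hpsi_cont]).
  assert (Hmaj := zgeom_majorant_mul _ _ psi (zgeom_majorant_gauss_cos _ HB) Hpsi_bound).
  rewrite (RInt_ext_R _ (fun x => zsum_R (fun s => f s x))).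
  2: { intros x _. unfold dual_gauss_series, f. rewrite Rmult_comm, <- zsum_R_scal.
       apply zsum_R_ext. intro; ring. }
  rewrite (RInt_zsum _ _ Hr Hfc Hmaj 0 1 Rle_0_1).
  apply zsum_R_ext. intro s. unfold f. rewrite <- RInt_scal_R.
  - apply RInt_ext_R. intros; ring.
  - apply ex_RInt_continuous_R. intro.
    apply continuity_pt_mult; [solve_continuity | apply Hpsi_cont].
Qed.

Lemma dual_gauss_series_cos_coef k :
  RInt (fun x => dual_gauss_series A x * cos (2 * PI * IZR k * x)) 0 1 = gauss (PI ^ 2 / A) (IZR k).
Proof.
  set (e := fun s => gauss (PI ^ 2 / A) (IZR s)).
  rewrite RInt_dual_gauss_series_mul; [| intro; solve_continuity | intro; apply Rabs_le, COS_bound].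
  rewrite (zsum_R_ext _ (fun s => (if Z.eq_dec s k then e s / 2 else 0)
                                  + (if Z.eq_dec s (- k) then e s / 2 else 0))).
  - destruct (zsum_R_delta (fun s => e s / 2) k) as [Hex1 Hv1].
    destruct (zsum_R_delta (fun s => e s / 2) (- k)) as [Hex2 Hv2].
    rewrite zsum_R_plus, Hv1, Hv2 by assumption.
    unfold e. rewrite opp_IZR, gauss_even. R_eq. field.
  - intro s. rewrite RInt_cos_cos_2PI_IZR. fold (e s). unfold zdelta.
    destruct (Z.eq_dec (s - k) 0), (Z.eq_dec s k), (Z.eq_dec (s + k) 0), (Z.eq_dec s (- k));
      try lia; field.
Qed.

Lemma dual_gauss_series_sin_coef k :
  RInt (fun x => dual_gauss_series A x * sin (2 * PI * IZR k * x)) 0 1 = 0.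
Proof.
  rewrite RInt_dual_gauss_series_mul; [| intro; solve_continuity | intro; apply Rabs_le, SIN_bound].
  rewrite (zsum_R_ext _ (fun _ => 0 * 0)) by (intro; rewrite RInt_cos_sin_2PI_IZR; ring).
  rewrite zsum_R_scal. R_eq. ring.
Qed.

End DualGaussSeries.

(** * Continuous periodic functions are determined by their Fourier coefficients *)

Lemma RInt_periodic_shift (h : R -> R) c : (forall x, continuity_pt h x) ->
  (forall x, h (x + 1) = h x) -> RInt h c (c + 1) = RInt h 0 1.
Proof.
  intros Hc Hp. assert (Hex : forall a b, ex_RInt h a b)
      by (intros; apply ex_RInt_continuous_R, Hc).
  rewrite <- (RInt_Chasles_R h c 0 (c + 1)), <- (RInt_Chasles_R h 0 1 (c + 1)) by apply Hex.
  assert (E : RInt h 1 (c + 1) = RInt h 0 c).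
  { rewrite <- (Rplus_0_l 1) at 1. rewrite <- RInt_shift by exact Hc.
    apply RInt_ext_R. intros; apply Hp. }
  rewrite E, (RInt_swap_R h c 0) by apply Hex. R_eq. ring.
Qed.

(* Cosine polynomials; closure under pointwise equality avoids function extensionality. *)
Inductive cos_poly : (R -> R) -> Prop :=
| cos_poly_zero : cos_poly (fun _ => 0)
| cos_poly_add_cos f c k : cos_poly f -> cos_poly (fun y => f y + c * cos (2 * PI * IZR k * y))
| cos_poly_ext f g : cos_poly f -> (forall y, f y = g y) -> cos_poly g.

Lemma cos_poly_scal f c : cos_poly f -> cos_poly (fun y => c * f y).
Proof.
  induction 1 as [| f c' k _ IH | f g _ IH Hfg].
  - apply (cos_poly_ext _ _ cos_poly_zero). intro; ring.
  - apply (cos_poly_ext _ _ (cos_poly_add_cos _ (c * c') k IH)). intro; ring.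
  - apply (cos_poly_ext _ _ IH). intro; now rewrite Hfg.
Qed.

Lemma cos_poly_add f g : cos_poly f -> cos_poly g -> cos_poly (fun y => f y + g y).
Proof.
  intros Hf. induction 1 as [| g c k _ IH | g h _ IH Hgh].
  - apply (cos_poly_ext _ _ Hf). intro; ring.
  - apply (cos_poly_ext _ _ (cos_poly_add_cos _ c k IH)). intro; ring.
  - apply (cos_poly_ext _ _ IH). intro; now rewrite Hgh.
Qed.

Lemma cos_poly_mul_cos f : cos_poly f -> cos_poly (fun y => f y * cos (2 * PI * y)).
Proof.
  induction 1 as [| f c k _ IH | f g _ IH Hfg].
  - apply (cos_poly_ext _ _ cos_poly_zero). intro; ring.
  - apply (cos_poly_ext _ _
             (cos_poly_add_cos _ (c / 2) (k - 1) (cos_poly_add_cos _ (c / 2) (k + 1) IH))).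
    intro y. rewrite plus_IZR, minus_IZR.
    replace (2 * PI * (IZR k + 1) * y) with (2 * PI * IZR k * y + 2 * PI * y) by ring.
    replace (2 * PI * (IZR k - 1) * y) with (2 * PI * IZR k * y - 2 * PI * y) by ring.
    rewrite cos_plus, cos_minus. field.
  - apply (cos_poly_ext _ _ IH). intro; now rewrite Hfg.
Qed.

Lemma continuity_pt_cos_poly f : cos_poly f -> forall x, continuity_pt f x.
Proof.
  induction 1 as [| f c k _ IH | f g _ IH Hfg]; intro x.
  - solve_continuity.
  - apply continuity_pt_plus; [apply IH | solve_continuity].
  - apply (continuity_pt_ext f); auto.
Qed.

Definition cos_kernel (n : nat) (y : R) := ((1 + cos (2 * PI * y)) / 2) ^ n.

Lemma cos_poly_cos_kernel n : cos_poly (cos_kernel n).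
Proof.
  induction n as [| n IH].
  - apply (cos_poly_ext _ _ (cos_poly_add_cos _ 1 0 cos_poly_zero)).
    intro; unfold cos_kernel. rewrite !Rmult_0_r, Rmult_0_l, cos_0. simpl. ring.
  - apply (cos_poly_ext _ _ (cos_poly_add _ _ (cos_poly_scal _ (/ 2) IH)
                                            (cos_poly_scal _ (/ 2) (cos_poly_mul_cos _ IH)))).
    intro; unfold cos_kernel. simpl. field.
Qed.

Lemma cos_kernel_nonneg n y : 0 <= cos_kernel n y.
Proof. apply pow_le. pose proof (COS_bound (2 * PI * y)). lra. Qed.

Lemma cos_2PI_Rabs y : cos (2 * PI * y) = cos (2 * PI * Rabs y).
Proof.
  unfold Rabs. destruct (Rcase_abs y); [| reflexivity]. rewrite <- cos_neg. f_equal. ring.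
Qed.

Lemma cos_kernel_le n y d : 0 < d -> d <= Rabs y <= 1/2 ->
  cos_kernel n y <= ((1 + cos (2 * PI * d)) / 2) ^ n.
Proof.
  intros Hd Hy. unfold cos_kernel. apply pow_incr. pose proof (COS_bound (2 * PI * y)).
  split; [lra |]. rewrite cos_2PI_Rabs. pose proof PI_RGT_0.
  destruct (Req_dec d (Rabs y)) as [<- | Hne]; [lra |].
  enough (cos (2 * PI * Rabs y) < cos (2 * PI * d)) by lra.
  apply cos_decreasing_1; nra.
Qed.

Lemma cos_kernel_ge n y d : 0 < d <= 1/2 -> Rabs y <= d / 2 ->
  ((1 + cos (PI * d)) / 2) ^ n <= cos_kernel n y.
Proof.
  intros Hd Hy. unfold cos_kernel. apply pow_incr. pose proof (COS_bound (PI * d)).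
  split; [lra |]. rewrite cos_2PI_Rabs. pose proof PI_RGT_0. pose proof (Rabs_pos y).
  destruct (Req_dec (PI * d) (2 * PI * Rabs y)) as [<- | Hne]; [lra |].
  enough (cos (PI * d) < cos (2 * PI * Rabs y)) by lra.
  apply cos_decreasing_1; nra.
Qed.

Lemma continuity_pt_cos_kernel_shift n b x : continuity_pt (fun x => cos_kernel n (x - b)) x.
Proof. unfold cos_kernel. solve_continuity. Qed.

Lemma RInt_cos_kernel_ge n b d : 0 < d <= 1/2 ->
  d * ((1 + cos (PI * d)) / 2) ^ n <= RInt (fun x => cos_kernel n (x - b)) (b - 1/2) (b + 1/2).
Proof.
  intros Hd. set (K := fun x => cos_kernel n (x - b)).
  assert (Hex : forall u v, ex_RInt K u v)
    by (intros; apply ex_RInt_continuous_R, continuity_pt_cos_kernel_shift).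
  rewrite <- (RInt_Chasles_R K (b - 1/2) (b - d/2) (b + 1/2)),
          <- (RInt_Chasles_R K (b - d/2) (b + d/2) (b + 1/2)) by apply Hex.
  assert (0 <= RInt K (b - 1/2) (b - d/2))
    by (apply RInt_ge_0; [lra | apply Hex | intros; apply cos_kernel_nonneg]).
  assert (0 <= RInt K (b + d/2) (b + 1/2))
    by (apply RInt_ge_0; [lra | apply Hex | intros; apply cos_kernel_nonneg]).
  assert (d * ((1 + cos (PI * d)) / 2) ^ n <= RInt K (b - d/2) (b + d/2)).
  { replace (d * _) with (RInt (fun _ => ((1 + cos (PI * d)) / 2) ^ n) (b - d/2) (b + d/2))
      by (rewrite RInt_const_R; R_eq; field).
    apply RInt_le; [lra | apply ex_RInt_continuous_R; intro; solve_continuity | apply Hex |].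
    intros x Hx. apply cos_kernel_ge; [lra | apply Rabs_le; lra]. }
  change (d * ((1 + cos (PI * d)) / 2) ^ n
          <= RInt K (b - 1/2) (b - d/2)
             + (RInt K (b - d/2) (b + d/2) + RInt K (b + d/2) (b + 1/2))).
  lra.
Qed.

Lemma RInt_mul_cos_kernel_le (g : R -> R) n b d eps M :
  0 < d <= 1/2 -> (forall x, continuity_pt g x) ->
  (forall x, Rabs (x - b) <= d -> Rabs (g x) <= eps) ->
  (forall x, b - 1/2 <= x <= b + 1/2 -> Rabs (g x) <= M) ->
  Rabs (RInt (fun x => g x * cos_kernel n (x - b)) (b - 1/2) (b + 1/2))
  <= eps * RInt (fun x => cos_kernel n (x - b)) (b - 1/2) (b + 1/2)
     + M * ((1 + cos (2 * PI * d)) / 2) ^ n.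
Proof.
  intros Hd Hgc Hnear Hfar.
  set (rho := (1 + cos (2 * PI * d)) / 2).
  assert (Hrho : 0 <= rho ^ n)
      by (apply pow_le; unfold rho; pose proof (COS_bound (2 * PI * d)); lra).
  assert (HM : 0 <= M) by (eapply Rle_trans; [apply Rabs_pos | apply (Hfar b); lra]).
  assert (Heps : 0 <= eps)
    by (eapply Rle_trans; [apply Rabs_pos | apply (Hnear b); rewrite Rminus_diag, Rabs_R0; lra]).
  assert (HK := continuity_pt_cos_kernel_shift n b).
  eapply Rle_trans; [apply abs_RInt_le; [lra |] |].
  { apply ex_RInt_continuous_R. intro. apply continuity_pt_mult; auto. }
  apply Rle_trans
    with (RInt (fun x => eps * cos_kernel n (x - b) + M * rho ^ n) (b - 1/2) (b + 1/2)).
  - apply RInt_le; [lra | | |].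
    + apply ex_RInt_continuous_R. intro.
      apply (continuity_pt_comp (fun x => g x * cos_kernel n (x - b)) Rabs);
        [apply continuity_pt_mult; auto | apply Rcontinuity_abs].
    + apply ex_RInt_continuous_R. intro.
      apply continuity_pt_plus; [apply continuity_pt_scal, HK | solve_continuity].
    + intros x Hx. rewrite Rabs_mult, (Rabs_pos_eq (cos_kernel n _)) by apply cos_kernel_nonneg.
      pose proof (cos_kernel_nonneg n (x - b)). pose proof (Rabs_pos (g x)).
      assert (0 <= M * rho ^ n) by (apply Rmult_le_pos; assumption).
      destruct (Rle_dec (Rabs (x - b)) d) as [Hxd | Hxd].
      * specialize (Hnear x Hxd). nra.
      * assert (cos_kernel n (x - b) <= rho ^ n)
          by (apply cos_kernel_le; [lra | split; [lra | apply Rabs_le; lra]]).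
        specialize (Hfar x ltac:(lra)). nra.
  - rewrite RInt_plus_R, RInt_scal_R, RInt_const_R.
    + replace (b + 1/2 - (b - 1/2)) with 1 by field. rewrite Rmult_1_l. apply Rle_refl.
    + apply ex_RInt_continuous_R, HK.
    + apply ex_RInt_scal_R, ex_RInt_continuous_R, HK.
    + apply ex_RInt_continuous_R. intro; solve_continuity.
Qed.

Lemma pow_ratio_eventually_le rho sig eta M : 0 <= rho < sig -> 0 < eta ->
  exists n, M * rho ^ n <= eta * sig ^ n.
Proof.
  intros Hrs He.
  assert (Hq : Rabs (rho / sig) < 1).
  { rewrite Rabs_pos_eq by (apply Rmult_le_pos; [lra | left; apply Rinv_0_lt_compat; lra]).
    apply Rmult_lt_reg_r with sig; [lra |]. unfold Rdiv. rewrite Rmult_assoc, Rinv_l; lra. }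
  destruct (pow_lt_1_zero _ Hq (eta / (Rabs M + 1))) as [n Hn].
  { apply Rdiv_lt_0_compat; [exact He | pose proof (Rabs_pos M); lra]. }
  exists n. specialize (Hn n (Nat.le_refl n)).
  assert (Hsig : 0 < sig ^ n) by (apply pow_lt; lra).
  assert (Hrho : 0 <= rho ^ n) by (apply pow_le; lra).
  assert (HM : 0 < Rabs M + 1) by (pose proof (Rabs_pos M); lra).
  replace ((rho / sig) ^ n) with (rho ^ n / sig ^ n) in Hn
    by (unfold Rdiv; rewrite Rpow_mult_distr, pow_inv; reflexivity).
  rewrite Rabs_pos_eq in Hn by (apply Rle_mult_inv_pos; assumption).
  apply (Rmult_lt_compat_r (sig ^ n * (Rabs M + 1))) in Hn; [| apply Rmult_lt_0_compat; assumption].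
  replace (rho ^ n / sig ^ n * (sig ^ n * (Rabs M + 1))) with (rho ^ n * (Rabs M + 1)) in Hn
    by (field; lra).
  replace (eta / (Rabs M + 1) * (sig ^ n * (Rabs M + 1))) with (eta * sig ^ n) in Hn
    by (field; lra).
  pose proof (Rle_abs M). nra.
Qed.

Lemma continuity_pt_small_radius (D : R -> R) b eps : continuity_pt D b -> 0 < eps ->
  exists d, 0 < d <= 1/2 /\ forall x, Rabs (x - b) <= d -> Rabs (D b - D x) <= eps.
Proof.
  intros Dc He.
  destruct (proj1 (continuity_pt_locally D b) Dc (mkposreal eps He)) as [d0 Hd0].
  pose proof (cond_pos d0). pose proof (Rmin_l (d0 / 2) (1/2)).
  exists (Rmin (d0 / 2) (1/2)). split; [split; [apply Rmin_case; lra | apply Rmin_r] |].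
  intros x Hx. rewrite <- Rabs_Ropp, Ropp_minus_distr. left. apply (Hd0 x).
  change (Rabs (x - b) < d0). lra.
Qed.

(* [cos_kernel n] concentrates at 0: its integral is at least [d * sig ^ n], while away from 0
   it is at most [rho ^ n], and [rho < sig]. *)
Lemma continuous_zero_of_orthogonal_cos_kernels (D : R -> R) b :
  (forall x, continuity_pt D x) ->
  (forall n, RInt (fun x => D x * cos_kernel n (x - b)) (b - 1/2) (b + 1/2) = 0) -> D b = 0.
Proof.
  intros Dc Horth.
  enough (Hsmall : forall eps, 0 < eps -> Rabs (D b) <= 2 * eps).
  { destruct (Req_dec (D b) 0) as [| Hne]; [assumption |].
    pose proof (Rabs_pos_lt _ Hne). pose proof (Hsmall (Rabs (D b) / 4) ltac:(lra)). lra. }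
  intros eps He.
  destruct (continuity_pt_small_radius D b eps (Dc b) He) as (d & Hd & Hnear).
  assert (Hgc : forall x, continuity_pt (fun x => D b - D x) x)
    by (intro; apply continuity_pt_minus; [solve_continuity | apply Dc]).
  destruct (continuity_ab_maj (fun x => Rabs (D b - D x)) (b - 1/2) (b + 1/2)) as [xM [HM _]];
    [lra | intros; apply (continuity_pt_comp (fun x => D b - D x) Rabs);
           [apply Hgc | apply Rcontinuity_abs] |].
  set (rho := (1 + cos (2 * PI * d)) / 2). set (sig := (1 + cos (PI * d)) / 2).
  assert (Hrs : 0 <= rho < sig).
  { pose proof PI_RGT_0. pose proof (COS_bound (2 * PI * d)).
    assert (cos (2 * PI * d) < cos (PI * d)) by (apply cos_decreasing_1; nra).
    unfold rho, sig. lra. }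
  destruct (pow_ratio_eventually_le rho sig (eps * d) (Rabs (D b - D xM)) Hrs ltac:(nra)) as [n Hn].
  set (W := RInt (fun x => cos_kernel n (x - b)) (b - 1/2) (b + 1/2)).
  assert (HW : d * sig ^ n <= W) by apply RInt_cos_kernel_ge, Hd.
  assert (Hsig : 0 < d * sig ^ n) by (apply Rmult_lt_0_compat; [lra | apply pow_lt; lra]).
  assert (HDW : D b * W = RInt (fun x => (D b - D x) * cos_kernel n (x - b)) (b - 1/2) (b + 1/2)).
  { assert (HK := continuity_pt_cos_kernel_shift n b).
    rewrite (RInt_ext_R _ (fun x => D b * cos_kernel n (x - b) - D x * cos_kernel n (x - b)))
      by (intros; ring).
    rewrite RInt_minus_R, RInt_scal_R, Horth.
    - unfold W. R_eq. ring.
    - apply ex_RInt_continuous_R, HK.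
    - apply ex_RInt_scal_R, ex_RInt_continuous_R, HK.
    - apply ex_RInt_continuous_R. intro. apply continuity_pt_mult; [apply Dc | apply HK]. }
  assert (Hbound := RInt_mul_cos_kernel_le _ n b d eps _ Hd Hgc Hnear (fun x _ => HM x ltac:(lra))).
  cbv beta in Hbound. fold rho W in Hbound.
  rewrite <- HDW, Rabs_mult, (Rabs_pos_eq W) in Hbound by lra. nra.
Qed.

Section ZeroFourierCoefficients.

Variable D : R -> R.
Hypothesis D_cont : forall x, continuity_pt D x.
Hypothesis D_periodic : forall x, D (x + 1) = D x.
Hypothesis D_cos : forall k, RInt (fun x => D x * cos (2 * PI * IZR k * x)) 0 1 = 0.
Hypothesis D_sin : forall k, RInt (fun x => D x * sin (2 * PI * IZR k * x)) 0 1 = 0.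

Let ex_RInt_D_mul f a b : (forall x, continuity_pt f x) -> ex_RInt (fun x => D x * f x) a b.
Proof. intros Hf. apply ex_RInt_continuous_R. intro; apply continuity_pt_mult; auto. Qed.

Lemma RInt_D_mul_shifted_cos b k :
  RInt (fun x => D x * cos (2 * PI * IZR k * (x - b))) (b - 1/2) (b + 1/2) = 0.
Proof.
  replace (b + 1/2) with ((b - 1/2) + 1) by field.
  rewrite (RInt_ext_R _ (fun x => cos (2 * PI * IZR k * b) * (D x * cos (2 * PI * IZR k * x))
                                 + sin (2 * PI * IZR k * b) * (D x * sin (2 * PI * IZR k * x)))).
  2: { intros x _. replace (2 * PI * IZR k * (x - b))
      with (2 * PI * IZR k * x - 2 * PI * IZR k * b) by ring.
       rewrite cos_minus. ring. }
  assert (Hc : forall x, continuity_pt (fun x => cos (2 * PI * IZR k * x)) x)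
      by (intro; solve_continuity).
  assert (Hs : forall x, continuity_pt (fun x => sin (2 * PI * IZR k * x)) x)
      by (intro; solve_continuity).
  rewrite RInt_plus_R, !RInt_scal_R, !RInt_periodic_shift, D_cos, D_sin;
    [R_eq; ring
    | intro; apply continuity_pt_mult; [apply D_cont | apply Hs]
    | intro; now rewrite D_periodic, sin_2PI_IZR_periodic
    | intro; apply continuity_pt_mult; [apply D_cont | apply Hc]
    | intro; now rewrite D_periodic, cos_2PI_IZR_periodic
    | apply ex_RInt_D_mul, Hs | apply ex_RInt_D_mul, Hc
    | apply ex_RInt_scal_R, ex_RInt_D_mul, Hc | apply ex_RInt_scal_R, ex_RInt_D_mul, Hs].
Qed.

Lemma RInt_D_mul_shifted_cos_poly b f : cos_poly f ->
  RInt (fun x => D x * f (x - b)) (b - 1/2) (b + 1/2) = 0.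
Proof.
  induction 1 as [| f c k Hf IH | f g _ IH Hfg].
  - rewrite (RInt_ext_R _ (fun _ => 0)), RInt_const_R by (intros; ring). R_eq. ring.
  - rewrite (RInt_ext_R _ (fun x => D x * f (x - b) + c * (D x * cos (2 * PI * IZR k * (x - b)))))
      by (intros; ring).
    rewrite RInt_plus_R, RInt_scal_R, IH, RInt_D_mul_shifted_cos; [R_eq; ring | ..].
    + apply ex_RInt_D_mul. intro; solve_continuity.
    + apply ex_RInt_D_mul. intro.
      apply (continuity_pt_comp (fun x => x - b) f); [solve_continuity |].
      apply continuity_pt_cos_poly, Hf.
    + apply ex_RInt_scal_R, ex_RInt_D_mul. intro; solve_continuity.
  - rewrite <- IH. apply RInt_ext_R. intros; now rewrite Hfg.
Qed.

Lemma periodic_eq0_of_fourier_coefs_eq0 b : D b = 0.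
Proof.
  apply (continuous_zero_of_orthogonal_cos_kernels D b D_cont). intro n.
  apply RInt_D_mul_shifted_cos_poly, cos_poly_cos_kernel.
Qed.

End ZeroFourierCoefficients.

(** * Poisson summation for the Gaussian *)

Lemma RInt_minus_scal_mul (f g h : R -> R) c a b :
  (forall x, continuity_pt f x) -> (forall x, continuity_pt g x) -> (forall x, continuity_pt h x) ->
  RInt (fun x => (f x - c * g x) * h x) a b
  = RInt (fun x => f x * h x) a b - c * RInt (fun x => g x * h x) a b.
Proof.
  intros Hf Hg Hh.
  assert (Hex : forall k, (forall x, continuity_pt k x) -> ex_RInt (fun x => k x * h x) a b)
    by (intros k Hk; apply ex_RInt_continuous_R; intro; apply continuity_pt_mult; auto).
  rewrite (RInt_ext_R _ (fun x => f x * h x - c * (g x * h x))) by (intros; ring).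
  rewrite RInt_minus_R, RInt_scal_R; [reflexivity | apply Hex, Hg | apply Hex, Hf |].
  apply ex_RInt_scal_R, Hex, Hg.
Qed.

Theorem periodized_gauss_eq_dual A x : 0 < A ->
  periodized_gauss A x = gauss_integral A * dual_gauss_series A x.
Proof.
  intros HA.
  set (D := fun x => periodized_gauss A x - gauss_integral A * dual_gauss_series A x).
  enough (HD : D x = 0) by (unfold D in HD; lra).
  assert (HF := continuity_pt_periodized_gauss A HA).
  assert (HH := continuity_pt_dual_gauss_series A HA).
  apply periodic_eq0_of_fourier_coefs_eq0.
  - intro. apply continuity_pt_minus; [apply HF | apply continuity_pt_scal, HH].
  - intro. unfold D. now rewrite periodized_gauss_periodic, dual_gauss_series_periodic.
  - intro k. unfold D. rewrite RInt_minus_scal_mul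
      by (exact HF || exact HH || intro; solve_continuity).
    rewrite periodized_gauss_cos_coef, dual_gauss_series_cos_coef by exact HA. R_eq. ring.
  - intro k. unfold D. rewrite RInt_minus_scal_mul
      by (exact HF || exact HH || intro; solve_continuity).
    rewrite periodized_gauss_sin_coef, dual_gauss_series_sin_coef by exact HA. R_eq. ring.
Qed.

Lemma is_lim_seq_nondecreasing_comp (g : R -> R) (u : nat -> R) (L : R) :
  (forall x y, 0 <= x <= y -> g x <= g y) -> is_lim_seq (fun N => g (INR N + 1)) L ->
  (forall N, 0 <= u N) -> is_lim_seq u p_infty -> is_lim_seq (fun N => g (u N)) L.
Proof.
  intros Hmono Hlim Hu0 Hu.
  assert (Hub : forall x, 0 <= x -> g x <= L).
  { intros x Hx. destruct (INR_unbounded x) as [N HN].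
    assert (Hle := is_lim_seq_le (fun _ => g x) (fun n => g (INR (n + N) + 1)) (g x) L).
    simpl in Hle. apply Hle; [| apply is_lim_seq_const |].
    2: exact (proj1 (is_lim_seq_incr_n (fun n => g (INR n + 1)) N L) Hlim).
    intro n. apply Hmono. split; [exact Hx |]. rewrite plus_INR. pose proof (pos_INR n). lra. }
  apply is_lim_seq_spec. intros eps.
  destruct (proj2 (is_lim_seq_spec _ _) Hlim eps) as [N0 HN0].
  specialize (HN0 N0 (Nat.le_refl _)).
  destruct (proj2 (is_lim_seq_spec _ _) Hu (INR N0 + 1)) as [N1 HN1].
  exists N1. intros N HN. specialize (HN1 N HN).
  assert (g (INR N0 + 1) <= g (u N)) by (apply Hmono; pose proof (pos_INR N0); lra).
  assert (g (u N) <= L) by apply Hub, Hu0.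
  apply Rabs_lt_between in HN0. apply Rabs_lt_between. lra.
Qed.

Lemma gauss_cos_RInt_0_scale A M : 0 < A ->
  sqrt A * gauss_cos_RInt A M 0 = gauss_cos_RInt 1 (sqrt A * M) 0.
Proof.
  intros HA. unfold gauss_cos_RInt.
  assert (Hc : forall x, continuity_pt (fun v => gauss 1 v * cos (0 * v)) x)
    by (intro; apply continuity_pt_mult; [apply continuity_pt_gauss | solve_continuity]).
  assert (H := RInt_comp_lin (fun v => gauss 1 v * cos (0 * v)) (sqrt A) 0 (- M) M
                 (ex_RInt_continuous_R _ _ _ Hc)).
  replace (sqrt A * - M + 0) with (- (sqrt A * M)) in H by ring.
  replace (sqrt A * M + 0) with (sqrt A * M) in H by ring.
  rewrite <- H, <- RInt_scal_R.
  - apply RInt_ext_R. intros x _. unfold scal; simpl; unfold mult; simpl. unfold gauss.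
    rewrite !Rmult_0_l, cos_0, Rplus_0_r. do 3 f_equal.
    rewrite Rpow_mult_distr, pow2_sqrt by lra. ring.
  - apply ex_RInt_continuous_R. intro.
    apply continuity_pt_mult; [apply continuity_pt_gauss | solve_continuity].
Qed.

Lemma gauss_cos_RInt_0_nondecreasing M M' : 0 <= M <= M' ->
  gauss_cos_RInt 1 M 0 <= gauss_cos_RInt 1 M' 0.
Proof.
  intros HM. unfold gauss_cos_RInt. set (f := fun u => gauss 1 u * cos (0 * u)).
  assert (Hex : forall a b, ex_RInt f a b)
    by (intros; apply ex_RInt_continuous_R; intro; apply continuity_pt_mult;
        [apply continuity_pt_gauss | solve_continuity]).
  assert (Hf : forall x, 0 <= f x)
    by (intro; unfold f; rewrite Rmult_0_l, cos_0, Rmult_1_r; left; apply gauss_pos).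
  rewrite <- (RInt_Chasles_R f (- M') (- M) M'), <- (RInt_Chasles_R f (- M) M M') by apply Hex.
  assert (0 <= RInt f (- M') (- M)) by (apply RInt_ge_0; [lra | apply Hex | intros; apply Hf]).
  assert (0 <= RInt f M M') by (apply RInt_ge_0; [lra | apply Hex | intros; apply Hf]).
  change (RInt f (- M) M <= RInt f (- M') (- M) + (RInt f (- M) M + RInt f M M')). lra.
Qed.

Lemma gauss_integral_scale A : 0 < A -> sqrt A * gauss_integral A = gauss_integral 1.
Proof.
  intros HA. assert (HsA : 0 < sqrt A) by (apply sqrt_lt_R0, HA).
  apply (is_lim_seq_unique_R (fun N => sqrt A * gauss_cos_RInt A (INR N + 1) 0)).
  - apply (is_lim_seq_scal_l _ (sqrt A) (gauss_integral A)), gauss_integral_lim, HA.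
  - eapply is_lim_seq_ext; [intro N; symmetry; apply gauss_cos_RInt_0_scale, HA |].
    apply (is_lim_seq_nondecreasing_comp (fun M => gauss_cos_RInt 1 M 0)).
    + intros x y Hxy. apply gauss_cos_RInt_0_nondecreasing, Hxy.
    + apply gauss_integral_lim, Rlt_0_1.
    + intro N. pose proof (pos_INR N). nra.
    + apply (is_lim_seq_mult (fun _ => sqrt A) (fun N => INR N + 1) (sqrt A) p_infty p_infty).
      * apply is_lim_seq_const.
      * apply (is_lim_seq_le_p_loc INR); [exists 0%nat; intros; lra | apply is_lim_seq_INR].
      * apply is_Rbar_mult_sym, is_Rbar_mult_p_infty_pos, HsA.
Qed.

Lemma dual_gauss_series_0 A : dual_gauss_series A 0 = periodized_gauss (PI ^ 2 / A) 0.
Proof.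
  apply zsum_R_ext. intro s. rewrite Rmult_0_r, cos_0, Rmult_1_r, Rplus_0_r. reflexivity.
Qed.

(* At [A = PI] the dual series at 0 is the periodization itself, which forces the constant. *)
Lemma gauss_integral_PI : gauss_integral PI = 1.
Proof.
  assert (HP := PI_RGT_0).
  assert (E := periodized_gauss_eq_dual PI 0 HP).
  rewrite dual_gauss_series_0 in E. replace (PI ^ 2 / PI) with PI in E by (field; lra).
  assert (Hpos := periodized_gauss_pos PI HP 0).
  apply (Rmult_eq_reg_r (periodized_gauss PI 0)); lra.
Qed.

Lemma gauss_integral_value A : 0 < A -> gauss_integral A = sqrt (PI / A).
Proof.
  intros HA. assert (HsA : 0 < sqrt A) by (apply sqrt_lt_R0, HA).
  assert (H1 := gauss_integral_scale PI PI_RGT_0).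
  rewrite gauss_integral_PI, Rmult_1_r in H1.
  assert (HA1 := gauss_integral_scale A HA). rewrite <- H1 in HA1.
  rewrite sqrt_div by (pose proof PI_RGT_0; lra).
  apply (Rmult_eq_reg_l (sqrt A)); [rewrite HA1; field | ]; lra.
Qed.

Theorem poisson_summation_gauss A x : 0 < A ->
  periodized_gauss A x = sqrt (PI / A) * dual_gauss_series A x.
Proof.
  intros HA. rewrite <- gauss_integral_value by exact HA. apply periodized_gauss_eq_dual, HA.
Qed.

(** * The convolution as a theta value *)

Lemma theta_imaginary_tau (a : Q) z T :
  theta 0 a (RtoC z) (Ci * RtoC T)
  = RtoC (zsum_R (fun s => gauss (PI * T) (IZR s) * cos (2 * PI * IZR s * (z + Q2R a)))).
Proof.
  assert (Hexponent : forall s : Z,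
    (RtoC PI * Ci * (Ci * RtoC T) * RtoC ((IZR s + Q2R 0) ^ 2)
     + RtoC (2 * PI) * Ci * (RtoC z + RtoC (Q2R a)) * RtoC (IZR s + Q2R 0))%C
    = (- (PI * T * IZR s ^ 2), 2 * PI * IZR s * (z + Q2R a))).
  { intro s. replace (Q2R 0) with 0 by (unfold Q2R; simpl; ring).
    unfold RtoC, Ci, Cmult, Cplus; simpl. f_equal; ring. }
  unfold theta, zsum_C.
  match goal with |- _ = RtoC ?r => change (RtoC r) with (r, 0) end. f_equal.
  - apply zsum_R_ext. intro s. rewrite Hexponent. reflexivity.
  - apply zsum_R_odd. intro s. rewrite !Hexponent. unfold cexp, Re, Im; simpl.
    rewrite opp_IZR. replace (2 * PI * - IZR s * (z + Q2R a))
        with (- (2 * PI * IZR s * (z + Q2R a))) by ring.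
    rewrite sin_neg. replace (- IZR s * (- IZR s * 1)) with (IZR s * (IZR s * 1)) by ring. ring.
Qed.

Section MainIdentity.

Variables (mu nu Gamma : R) (a : Q) (q : R).
Hypotheses (Hmu : 0 < mu) (Hnu : 0 < nu) (HGamma : Gamma <> 0).

Let c := 1 + nu / mu.
Let A := c * Gamma ^ 2 / (2 * nu).
Let y := Q2R a - q / (c * Gamma).

Let Hc : 0 < c.
Proof. unfold c. assert (0 < nu / mu) by (apply Rdiv_lt_0_compat; assumption). lra. Qed.

Let HG2 : 0 < Gamma ^ 2.
Proof. apply pow2_gt_0, HGamma. Qed.

Lemma quadratic_coefficient_pos : 0 < A.
Proof. unfold A. apply Rdiv_lt_0_compat; nra. Qed.

(* Completing the square in the exponent, with x = s + a:
   x^2 Gamma^2 / (2 mu) + (q - x Gamma)^2 / (2 nu)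
   = q^2 / (2 (mu + nu)) + A (x - q / (c Gamma))^2. *)
Lemma E_conv_G_periodized_gauss :
  E_conv_G mu Gamma a nu q
  = / sqrt (2 * PI * nu) * exp (- q ^ 2 / (2 * (mu + nu))) * periodized_gauss A y.
Proof.
  unfold E_conv_G, periodized_gauss. rewrite <- zsum_R_scal. apply zsum_R_ext. intro s.
  unfold Gauss, gauss. set (x := IZR s + Q2R a).
  replace (IZR s + y) with (x - q / (c * Gamma)) by (unfold x, y; ring).
  rewrite Rmult_comm, !Rmult_assoc, <- !exp_plus. f_equal. f_equal.
  unfold A, c. field. repeat split; lra.
Qed.

Lemma theta_dual_gauss_series :
  theta 0 a (RtoC (- q / (c * Gamma))) (Ci * RtoC (2 * PI * nu / (c * Gamma ^ 2)))
  = RtoC (dual_gauss_series A y).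
Proof.
  rewrite theta_imaginary_tau. f_equal. apply zsum_R_ext. intro s. f_equal.
  - f_equal. unfold A. field. repeat split; lra.
  - f_equal. unfold y. field. split; lra.
Qed.

Lemma normalizing_constants_eq :
  / sqrt (2 * PI * nu) * sqrt (PI / A)
      = sqrt (2 * PI * mu / Gamma ^ 2) * / sqrt (2 * PI * (mu + nu)).
Proof.
  assert (HP := PI_RGT_0). assert (HA := quadratic_coefficient_pos).
  rewrite <- !sqrt_inv, <- !sqrt_mult; [f_equal; unfold A, c; field; repeat split; lra | ..].
  all: apply Rlt_le; first [apply Rinv_0_lt_compat | apply Rdiv_lt_0_compat]; nra.
Qed.

End MainIdentity.

Theorem lemma1 (mu nu Gamma : R) (a : Q) (q : R) :
  0 < mu -> 0 < nu -> Gamma <> 0 ->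
  RtoC (E_conv_G mu Gamma a nu q) =
  (RtoC (sqrt (2 * PI * mu / Gamma ^ 2) * Gauss (mu + nu) q)
   * theta 0%Q a (RtoC (- q / ((1 + nu / mu) * Gamma)))
                 (Ci * RtoC (2 * PI * nu / ((1 + nu / mu) * Gamma ^ 2))))%C.
Proof.
  intros Hmu Hnu HGamma.
  rewrite theta_dual_gauss_series, E_conv_G_periodized_gauss, poisson_summation_gauss
    by (assumption || apply quadratic_coefficient_pos; assumption).
  rewrite <- RtoC_mult. f_equal. unfold Gauss.
  rewrite <- (Rmult_assoc (sqrt _)), <- normalizing_constants_eq by assumption. ring.
Qed.
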